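(* For every $\varepsilon>0$ there exist a positive integer $n$ and a joint probability distribution of the pair (principal's utility $x$, agent's utility $y$) on $\mathbb{R}_{\ge0}^2$ such that, in the distributional delegation model with $n$ samples, for every mechanism $M$ and every best response $\sigma$ of the agent to $M$, the principal's expected utility is less than $\left(\frac12+\varepsilon\right)\mathbb{E}[x_*]$, where $x_*=\max\{x(\omega_1),\ldots,x(\omega_n)\}$ for $n$ i.i.d. samples $\omega_1,\ldots,\omega_n$.
   Context: Distributional model: $\Omega$ is a probability space with probability measure $\mu$ (here $\Omega=\mathbb{R}_{\ge0}^2$ with the given distribution, and $x,y$ are the coordinate functions). The principal's utility is $x:\Omega\to\mathbb{R}_{\ge0}$ and the agent's utility is $y:\Omega\to\mathbb{R}_{\ge0}$. Let $\Omega_+=\Omega\cup\{\bot\}$, where $\bot$ is the null outcome with $x(\bot)=y(\bot)=0$. The agent draws $n$ i.i.d. samples $\omega_1,\ldots,\omega_n$ from $\mu$; the principal cannot observe them. A mechanism $M=(\Sigma,g)$ consists of a signal set $\Sigma$ and a map $g:\Sigma\to\Omega_+$. An agent strategy is a map $\sigma$ from finite sequences of elements of $\Omega$ to $\Sigma$. If the agent observes $\omega_1,\ldots,\omega_n$ and the outcome is $\omega=g(\sigma(\omega_1,\ldots,\omega_n))$, then the utilities are $(x(\omega),y(\omega))$ if $\omega\in\{\omega_1,\ldots,\omega_n,\bot\}$, and otherwise the principal gets $0$ and the agent gets $-1$. A best response is a strategy that, for every sample sequence, maximizes the agent's utility over all signals in $\Sigma$. *)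

From HB Require Import structures.
From mathcomp Require Import all_boot all_order all_algebra.
From mathcomp Require Import reals.
Set Implicit Arguments. Unset Strict Implicit. Unset Printing Implicit Defensive.
Import Order.TTheory GRing.Theory Num.Theory.
Local Open Scope ring_scope.

(* A (finitely supported) joint distribution of (x, y) on R_{>=0}^2:
   atoms fd_pt i with probabilities fd_w i. *)
Record fdist (R : realType) := FDist {
  fd_size : nat;
  fd_pt : 'I_fd_size -> R * R;
  fd_w : 'I_fd_size -> R }.
Arguments fd_size {R} f.
Arguments fd_pt {R} f _.
Arguments fd_w {R} f _.

Definition valid_fdist (R : realType) (d : fdist R) : Prop :=
  (forall i, 0 <= fd_w d i) /\ (\sum_i fd_w d i = 1) /\
  (forall i, 0 <= (fd_pt d i).1 /\ 0 <= (fd_pt d i).2).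

Definition expect_iid (R : realType) (d : fdist R) (n : nat)
    (F : seq (R * R) -> R) : R :=
  \sum_(t : n.-tuple 'I_(fd_size d))
     (\prod_(j < n) fd_w d (tnth t j)) * F [seq fd_pt d i | i <- t].

(* Outcomes are elements of Omega_+ = Omega \cup {bot}; bot is None. *)
Definition agent_util (R : realType) (ws : seq (R * R)) (o : option (R * R)) : R :=
  match o with
  | None => 0
  | Some a => if a \in ws then a.2 else -1
  end.

Definition principal_util (R : realType) (ws : seq (R * R)) (o : option (R * R)) : R :=
  match o with
  | None => 0
  | Some a => if a \in ws then a.1 else 0
  end.

Definition best_response (R : realType) (Sig : Type) (g : Sig -> option (R * R))
    (sigma : seq (R * R) -> Sig) : Prop :=
  forall (ws : seq (R * R)) (s : Sig),
    agent_util ws (g s) <= agent_util ws (g (sigma ws)).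

Definition xstar (R : realType) (ws : seq (R * R)) : R :=
  \big[Num.max/0]_(w <- ws) w.1.

(* Sample twice from (1 - p) a + p b with a = (1, 2) and b = (1/(2p), 1): the agent
   prefers a, the principal prefers the rare b.  If the mechanism can output a, a
   best-responding agent who sees a must end with an outcome of agent utility at least 2,
   which is a itself, so the principal gets at most 1 unless both samples are b; this
   yields at most 1 - p^2 + p/2.  If it cannot output a, the principal gets nothing on
   the samples (a, a), i.e. at most 1 - p/2.  Since E[x_*] = 2 - 5p/2 + p^2, the ratio
   tends to 1/2 as p -> 0. *)

From Stdlib Require Import Classical.
From HB Require Import structures.
From mathcomp Require Import all_boot all_order all_algebra.
From mathcomp Require Import reals.
From mathcomp Require Import ring lra.
Set Implicit Arguments.
Unset Strict Implicit.
Unset Printing Implicit Defensive.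

Import Order.TTheory GRing.Theory Num.Theory.
Local Open Scope ring_scope.

Section Delegation.
Variable R : realType.
Implicit Types (ws : seq (R * R)) (o : option (R * R)) (a u v w : R * R).

Lemma xstar_cons w ws : xstar (w :: ws) = Num.max w.1 (xstar ws).
Proof. by rewrite /xstar big_cons. Qed.

Lemma xstar_ge0 ws : 0 <= xstar ws.
Proof. by elim: ws => [|w ws IH]; rewrite ?xstar_cons ?le_max ?IH ?orbT // /xstar big_nil. Qed.

Lemma xstar_ge w ws : w \in ws -> w.1 <= xstar ws.
Proof.
elim: ws => // v ws IH; rewrite inE xstar_cons le_max => /orP[/eqP-> | /IH->];
  by rewrite ?lexx ?orbT.
Qed.

Lemma xstar2 u v : 0 <= u.1 -> 0 <= v.1 -> xstar [:: u; v] = Num.max u.1 v.1.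
Proof. by move=> u1_ge0 v1_ge0; rewrite !xstar_cons /xstar big_nil (max_l v1_ge0). Qed.

Lemma principal_util_le_xstar ws o : principal_util ws o <= xstar ws.
Proof.
case: o => [a|] /=; last exact: xstar_ge0.
by case: ifPn => [/xstar_ge // | _]; apply: xstar_ge0.
Qed.

Lemma principal_util_unoffered ws o :
  (forall w, w \in ws -> o != Some w) -> principal_util ws o = 0.
Proof.
case: o => [a|] //= unoffered; case: ifPn => // a_ws.
by have := unoffered a a_ws; rewrite eqxx.
Qed.

Lemma best_response_principal_util_le (Sig : Type) (g : Sig -> option (R * R))
    (sigma : seq (R * R) -> Sig) (s : Sig) a ws :
  best_response g sigma -> g s = Some a -> a \in ws -> 0 < a.2 ->
  (forall w, w \in ws -> a.2 <= w.2 -> w.1 <= a.1) ->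
  principal_util ws (g (sigma ws)) <= a.1.
Proof.
move=> br ga a_ws a2_gt0 dominated.
have := br ws s; rewrite ga /= a_ws.
case: (g (sigma ws)) => [w|] /=; last by move=> /(lt_le_trans a2_gt0); rewrite ltxx.
case: ifPn => [w_ws a2_le|_ a2_le]; first exact: dominated.
by have := lt_le_trans a2_gt0 a2_le; rewrite ltr0N1.
Qed.

Lemma expect_iid2 (d : fdist R) (F : seq (R * R) -> R) :
  expect_iid d 2 F = \sum_i \sum_j (fd_w d i * fd_w d j) * F [:: fd_pt d i; fd_pt d j].
Proof.
rewrite /expect_iid pair_big /=.
rewrite (reindex (fun ij : 'I_(fd_size d) * 'I_(fd_size d) => [tuple ij.1; ij.2])) /=.
  by apply: eq_bigr => -[i j] _; rewrite !big_ord_recl big_ord0 mulr1.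
exists (fun t => (tnth t ord0, tnth t (lift ord0 ord0))) => [[i j]|t] _ //=.
by apply: eq_from_tnth => -[[|[|k]] lt_k2] //=;
  rewrite [LHS]/tnth /=; congr tnth; apply: val_inj.
Qed.

Definition two_point (p : R) a b : fdist R :=
  @FDist R 2 (fun i => if i == ord0 then a else b) (fun i => if i == ord0 then 1 - p else p).

Lemma valid_two_point p a b :
  0 <= p <= 1 -> 0 <= a.1 -> 0 <= a.2 -> 0 <= b.1 -> 0 <= b.2 ->
  valid_fdist (two_point p a b).
Proof.
move=> /andP[p_ge0 p_le1] *; split; [|split].
- by move=> i /=; case: ifP; lra.
- by rewrite big_ord_recl big_ord1 /=; lra.
- by move=> i /=; case: ifP.
Qed.

Lemma expect_iid_two_point2 p a b (F : seq (R * R) -> R) :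
  expect_iid (two_point p a b) 2 F =
    (1 - p) ^+ 2 * F [:: a; a] + (1 - p) * p * (F [:: a; b] + F [:: b; a])
    + p ^+ 2 * F [:: b; b].
Proof. rewrite expect_iid2 !big_ord_recl !big_ord0 /=; ring. Qed.

Lemma expect_iid_two_point2_le p a b (F : seq (R * R) -> R) caa cab cba cbb :
  0 <= p <= 1 -> F [:: a; a] <= caa -> F [:: a; b] <= cab -> F [:: b; a] <= cba ->
  F [:: b; b] <= cbb ->
  expect_iid (two_point p a b) 2 F
    <= (1 - p) ^+ 2 * caa + (1 - p) * p * (cab + cba) + p ^+ 2 * cbb.
Proof.
move=> /andP[p_ge0 p_le1] Faa Fab Fba Fbb; rewrite expect_iid_two_point2.
have w_ab : 0 <= (1 - p) * p by rewrite mulr_ge0 // subr_ge0.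
by rewrite !lerD ?ler_wpM2l ?lerD ?sqr_ge0.
Qed.

Lemma expect_xstar_two_point2 p a b : 0 <= a.1 <= b.1 ->
  expect_iid (two_point p a b) 2 (@xstar R) = (1 - p) ^+ 2 * a.1 + (1 - (1 - p) ^+ 2) * b.1.
Proof.
move=> /andP[a1_ge0 a1_le_b1]; have b1_ge0 := le_trans a1_ge0 a1_le_b1.
rewrite expect_iid_two_point2 !xstar2 // maxxx (max_r a1_le_b1) (max_l a1_le_b1) maxxx.
ring.
Qed.

Lemma expect_principal_util_two_point2_le p a b (Sig : Type)
    (g : Sig -> option (R * R)) (sigma : seq (R * R) -> Sig) :
  0 <= p <= 1 -> 0 < a.2 -> b.2 < a.2 -> 0 <= a.1 <= b.1 -> best_response g sigma ->
  expect_iid (two_point p a b) 2 (fun ws => principal_util ws (g (sigma ws)))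
    <= Num.max ((1 - p ^+ 2) * a.1 + p ^+ 2 * b.1) ((1 - (1 - p) ^+ 2) * b.1).
Proof.
move=> p01 a2_gt0 b2_lt_a2 /andP[a1_ge0 a1_le_b1] br.
set U := fun ws => principal_util ws (g (sigma ws)).
have b1_ge0 := le_trans a1_ge0 a1_le_b1.
have le_b1 ws : ws \in [:: [:: a; b]; [:: b; a]; [:: b; b]] -> U ws <= b.1.
  rewrite !inE => /or3P[] /eqP->; apply: le_trans (principal_util_le_xstar _ _) _;
  by rewrite xstar2 // ?maxxx ?(max_r a1_le_b1) ?(max_l a1_le_b1).
have bb : U [:: b; b] <= b.1 by rewrite le_b1 // !inE eqxx !orbT.
have [[s ga] | a_unoffered] := classic (exists s, g s = Some a).
  have offered ws : all (mem [:: a; b]) ws -> a \in ws -> U ws <= a.1.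
    move=> /allP ws_ab a_ws; apply: best_response_principal_util_le br ga a_ws a2_gt0 _.
    by move=> w /ws_ab; rewrite !inE => /orP[] /eqP-> //; rewrite leNgt b2_lt_a2.
  have aa : U [:: a; a] <= a.1 by rewrite offered //= !inE eqxx.
  have ab : U [:: a; b] <= a.1 by rewrite offered //= !inE !eqxx ?orbT.
  have ba : U [:: b; a] <= a.1 by rewrite offered //= !inE !eqxx ?orbT.
  apply: le_trans (expect_iid_two_point2_le p01 aa ab ba bb) _.
  suff -> : (1 - p) ^+ 2 * a.1 + (1 - p) * p * (a.1 + a.1) + p ^+ 2 * b.1
           = (1 - p ^+ 2) * a.1 + p ^+ 2 * b.1 by rewrite le_max lexx.
  by ring.
have aa : U [:: a; a] <= 0.
  rewrite /U principal_util_unoffered // => w; rewrite !inE orbb => /eqP->.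
  by apply/eqP => ga; apply: a_unoffered; exists (sigma [:: a; a]).
have ab : U [:: a; b] <= b.1 by rewrite le_b1 // !inE eqxx.
have ba : U [:: b; a] <= b.1 by rewrite le_b1 // !inE eqxx orbT.
apply: le_trans (expect_iid_two_point2_le p01 aa ab ba bb) _.
suff -> : (1 - p) ^+ 2 * 0 + (1 - p) * p * (b.1 + b.1) + p ^+ 2 * b.1
         = (1 - (1 - p) ^+ 2) * b.1 by rewrite le_max lexx orbT.
by ring.
Qed.

Lemma principal_bound_lt_half_expect_xstar (eps p b1 : R) :
  0 < p -> p <= 1 / 4 -> 4 * p <= eps -> p * b1 = 1 / 2 ->
  Num.max ((1 - p ^+ 2) * 1 + p ^+ 2 * b1) ((1 - (1 - p) ^+ 2) * b1)
    < (2^-1 + eps) * ((1 - p) ^+ 2 * 1 + (1 - (1 - p) ^+ 2) * b1).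
Proof.
move=> p_gt0 p_le p_eps pb1.
have -> : p ^+ 2 * b1 = p / 2 by rewrite expr2 -mulrA pb1; field.
have -> : (1 - (1 - p) ^+ 2) * b1 = 1 - p / 2.
  by rewrite (_ : 1 - (1 - p) ^+ 2 = (2 - p) * p); [rewrite -mulrA pb1; field | ring].
rewrite !mulr1 max_l; last by nra.
set E := (1 - p) ^+ 2 + (1 - p / 2).
have E_ge0 : 0 <= E by rewrite /E; nra.
have := ler_wpM2r E_ge0 p_eps; rewrite /E; nra.
Qed.

End Delegation.

Theorem mainTheorem4 (R : realType) (eps : R) (heps : 0 < eps) :
  exists (n : nat) (d : fdist R),
    (0 < n)%N /\ valid_fdist d /\
    forall (Sig : Type) (g : Sig -> option (R * R)) (sigma : seq (R * R) -> Sig),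
      best_response g sigma ->
      expect_iid d n (fun ws => principal_util ws (g (sigma ws)))
        < (2^-1 + eps) * expect_iid d n (@xstar R).
Proof.
have m_gt0 : 0 < Num.min eps 1 by rewrite lt_min heps ltr01.
have m_le1 : Num.min eps 1 <= 1 by rewrite ge_min lexx orbT.
have m_le_eps : Num.min eps 1 <= eps by rewrite ge_min lexx.
pose p := Num.min eps 1 / 4; pose b : R * R := ((2 * p)^-1, 1).
have p_gt0 : 0 < p by rewrite /p; lra.
have p01 : 0 <= p <= 1 by apply/andP; split; rewrite /p; lra.
have pb1 : p * b.1 = 1 / 2 by rewrite /= invfM mulrCA divff ?gt_eqF // mulr1 div1r.
have a1_b1 : 0 <= (1 : R) <= b.1 by rewrite ler01 invf_ge1 ?mulr_gt0 //= /p; lra.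
exists 2%N, (two_point p (1, 2) b); split => //; split.
  by apply: valid_two_point => //; case/andP: a1_b1 => _; apply: le_trans.
move=> Sig g sigma br; rewrite expect_xstar_two_point2 //.
apply: le_lt_trans
  (expect_principal_util_two_point2_le (a := (1, 2)) (b := b) p01 _ _ a1_b1 br) _.
- by [].
- by rewrite ltr1n.
- by apply: principal_bound_lt_half_expect_xstar pb1; rewrite /p; lra.
Qed.
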